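(* Let $(X,d,A)$ be a metric pair with $(X,d)$ complete. Then $(\overline{D}_\infty(X,A),W_\infty)$ is complete.
   Context: A metric on $X$ is a map $d:X\times X\to[0,\infty]$ with $d(x,x)=0$, symmetry and the triangle inequality (infinite distances allowed, $d(x,y)=0$ need not imply $x=y$, so limits need not be unique); complete means every Cauchy sequence converges. A metric pair $(X,d,A)$ is such a space with a closed subset $A$. Write $d(x,A)=\inf_{a\in A}d(x,a)$, $A^\delta=\{x:d(x,A)<\delta\}$. $\overline{D}(X,A)$ is the set of countable formal sums $\hat\alpha=\sum_{i\in I}x_i$ of points of $X\setminus A$ (repetitions allowed). A matching of $\hat\alpha=\sum_{i\in I}x_i$, $\hat\beta=\sum_{j\in J}y_j$ is a formal sum $\sum_{k\in K}(x_k,y_{\varphi(k)})+\sum_{i\in I\setminus K}(x_i,z_i)+\sum_{j\in J\setminus\varphi(K)}(w_j,y_j)$ with $K\subset I$, $\varphi$ injective, $z_i,w_j\in A$; its $\infty$-cost is the supremum of the distances of paired points, and $W_\infty(\alpha,\beta)$ is the infimum of $\infty$-costs over matchings. $u_\delta(\alpha)$ is the restriction of $\hat\alpha$ to $X\setminus A^\delta$, and $\overline{D}_\infty(X,A)=\{\alpha\in\overline{D}(X,A):|u_\delta(\alpha)|<\infty\text{ for all }\delta>0\}$. *)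

From Stdlib Require Import Reals List.
From Coquelicot Require Import Coquelicot.
Set Implicit Arguments.
Open Scope R_scope.

Definition is_ext_metric (X : Type) (d : X -> X -> Rbar) : Prop :=
  (forall x y, Rbar_le (Finite 0) (d x y)) /\
  (forall x, d x x = Finite 0) /\
  (forall x y, d x y = d y x) /\
  (forall x y z, Rbar_le (d x z) (Rbar_plus (d x y) (d y z))).

(* d(x, A) = inf_{a in A} d(x, a)  (= +oo if A is empty) *)
Definition dist_set (X : Type) (d : X -> X -> Rbar) (A : X -> Prop) (x : X) : Rbar :=
  Rbar_glb (fun r => exists a, A a /\ r = d x a).

Definition is_closed_set (X : Type) (d : X -> X -> Rbar) (A : X -> Prop) : Prop :=
  forall x, (forall eps : R, 0 < eps -> exists a, A a /\ Rbar_lt (d x a) (Finite eps)) -> A x.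

Definition cauchy_seq (T : Type) (d : T -> T -> Rbar) (u : nat -> T) : Prop :=
  forall eps : R, 0 < eps ->
    exists N : nat, forall m n, (N <= m)%nat -> (N <= n)%nat -> Rbar_lt (d (u m) (u n)) (Finite eps).

Definition converges_to (T : Type) (d : T -> T -> Rbar) (u : nat -> T) (l : T) : Prop :=
  forall eps : R, 0 < eps ->
    exists N : nat, forall n, (N <= n)%nat -> Rbar_lt (d (u n) l) (Finite eps).

Definition complete_on (T : Type) (P : T -> Prop) (d : T -> T -> Rbar) : Prop :=
  forall u : nat -> T, (forall n, P (u n)) -> cauchy_seq d u ->
    exists l, P l /\ converges_to d u l.

(* A countable formal sum sum_{i in I} x_i: the countable index set I is
   represented as a subset of nat, the points by a map nat -> X. *)
Record fsum (X : Type) := FSum { fidx : nat -> Prop ; fpt : nat -> X }.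

Definition in_Dbar (X : Type) (A : X -> Prop) (a : fsum X) : Prop :=
  forall i, fidx a i -> ~ A (fpt a i).

(* |u_delta(alpha)| < oo : finitely many indices i with x_i outside A^delta *)
Definition in_Dinf (X : Type) (d : X -> X -> Rbar) (A : X -> Prop) (a : fsum X) : Prop :=
  in_Dbar A a /\
  forall delta : R, 0 < delta ->
    exists l : list nat, forall i, fidx a i ->
      ~ Rbar_lt (dist_set d A (fpt a i)) (Finite delta) -> In i l.

Definition is_matching (X : Type) (A : X -> Prop) (a b : fsum X)
  (K : nat -> Prop) (phi : nat -> nat) (z w : nat -> X) : Prop :=
  (forall k, K k -> fidx a k) /\
  (forall k, K k -> fidx b (phi k)) /\
  (forall k k', K k -> K k' -> phi k = phi k' -> k = k') /\
  (forall i, fidx a i -> ~ K i -> A (z i)) /\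
  (forall j, fidx b j -> ~ (exists k, K k /\ phi k = j) -> A (w j)).

(* infinity-cost: supremum of the distances of paired points
   (0 is included so that the empty supremum is 0 in [0, oo]) *)
Definition match_cost (X : Type) (d : X -> X -> Rbar) (a b : fsum X)
  (K : nat -> Prop) (phi : nat -> nat) (z w : nat -> X) : Rbar :=
  Rbar_lub (fun r =>
    r = Finite 0 \/
    (exists k, K k /\ r = d (fpt a k) (fpt b (phi k))) \/
    (exists i, fidx a i /\ ~ K i /\ r = d (fpt a i) (z i)) \/
    (exists j, fidx b j /\ ~ (exists k, K k /\ phi k = j) /\ r = d (w j) (fpt b j))).

Definition W_inf (X : Type) (d : X -> X -> Rbar) (A : X -> Prop) (a b : fsum X) : Rbar :=
  Rbar_glb (fun c => exists K phi z w,
    is_matching A a b K phi z w /\ c = match_cost d a b K phi z w).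

From Stdlib Require Import Reals List.
From Coquelicot Require Import Coquelicot.
From Stdlib Require Import Lra Lia Classical ClassicalEpsilon Arith.Cantor.
Open Scope R_scope.

(* Pass to a subsequence beta_t of the Cauchy sequence with W(beta_t, beta_(t+1)) < 2^-t
   and fix matchings of cost at most 2^-t between consecutive terms.  Every point of
   beta_s not hit by the matching from beta_(s-1) starts a chain, obtained by following
   the later matchings; a chain that never stops is Cauchy, and its limit lies within
   2 * 2^-t of its point in beta_t.  The limits outside A form alpha, which lies in
   D_inf because a limit far from A comes from a point of beta_t far from A.  Matching
   every point of beta_k with the limit of its chain, or with a point of A when the
   chain stops or its limit falls into A, gives W(beta_k, alpha) <= 2 * 2^-k, so the
   whole sequence converges to alpha. *)

Lemma Rbar_lub_is_lub (E : Rbar -> Prop) : Rbar_is_lub E (Rbar_lub E).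
Proof. unfold Rbar_lub; destruct (Rbar_ex_lub E); assumption. Qed.

Lemma Rbar_glb_is_glb (E : Rbar -> Prop) : Rbar_is_glb E (Rbar_glb E).
Proof. unfold Rbar_glb; destruct (Rbar_ex_glb E); assumption. Qed.

Lemma Rbar_glb_le (E : Rbar -> Prop) x : E x -> Rbar_le (Rbar_glb E) x.
Proof. intros Hx; apply (Rbar_glb_is_glb E); exact Hx. Qed.

Lemma Rbar_glb_lt_ex (E : Rbar -> Prop) (r : R) :
  Rbar_lt (Rbar_glb E) r -> exists x, E x /\ Rbar_lt x r.
Proof.
  intros Hlt; apply NNPP; intros Hno.
  apply (Rbar_lt_not_le _ _ Hlt), (Rbar_glb_is_glb E).
  intros x Hx; apply Rbar_not_lt_le; intros Hxr; apply Hno; eauto.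
Qed.

Lemma Rbar_le_Finite_weaken x (r r' : R) : Rbar_le x r -> r <= r' -> Rbar_le x r'.
Proof. intros Hx Hr; apply Rbar_le_trans with r; [exact Hx | exact Hr]. Qed.

Lemma Rbar_le_Finite_eps x (r : R) :
  Rbar_le 0 x -> (forall eta, 0 < eta -> Rbar_le x (r + eta)) -> Rbar_le x r.
Proof.
  intros Hx Heta; destruct x as [x | |]; simpl in *.
  - apply Rnot_lt_le; intros Hlt; specialize (Heta ((x - r) / 2)); simpl in Heta; lra.
  - apply (Heta 1); lra.
  - contradiction.
Qed.

Section Metric.
Context {X : Type} (d : X -> X -> Rbar) (A : X -> Prop).
Hypothesis Hm : is_ext_metric d.

Lemma d_nonneg x y : Rbar_le 0 (d x y).
Proof. apply Hm. Qed.

Lemma d_refl x : d x x = 0.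
Proof. apply Hm. Qed.

Lemma d_sym x y : d x y = d y x.
Proof. apply Hm. Qed.

Lemma d_triangle_le x y z (r s : R) :
  Rbar_le (d x y) r -> Rbar_le (d y z) s -> Rbar_le (d x z) (r + s).
Proof.
  intros Hxy Hyz; destruct Hm as (_ & _ & _ & Htri).
  specialize (Htri x y z); pose proof (d_nonneg x y); pose proof (d_nonneg y z).
  destruct (d x y) as [a | |]; destruct (d y z) as [b | |]; simpl in *; try contradiction.
  apply Rbar_le_trans with (a + b); [exact Htri | simpl; lra].
Qed.

Lemma dist_set_lt x a (r : R) : A a -> Rbar_lt (d x a) r -> Rbar_lt (dist_set d A x) r.
Proof.
  intros Ha Hxa; apply Rbar_le_lt_trans with (d x a); [|exact Hxa].
  apply Rbar_glb_le; eauto.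
Qed.

Lemma dist_set_lt_ex x (r : R) :
  Rbar_lt (dist_set d A x) r -> exists a, A a /\ Rbar_lt (d x a) r.
Proof. intros Hlt; destruct (Rbar_glb_lt_ex _ _ Hlt) as (? & (a & Ha & ->) & Hxa); eauto. Qed.

Lemma dist_set_lt_triangle x y (r s : R) :
  Rbar_le (d x y) r -> Rbar_lt (dist_set d A y) s -> Rbar_lt (dist_set d A x) (r + s).
Proof.
  intros Hxy Hy; destruct (dist_set_lt_ex _ _ Hy) as (a & Ha & Hya).
  apply dist_set_lt with a; [exact Ha|].
  destruct (d y a) as [t | |] eqn:Eya; simpl in Hya; try contradiction.
  - apply Rbar_le_lt_trans with (r + t).
    + apply d_triangle_le with y; [exact Hxy | rewrite Eya; apply Rle_refl].
    + simpl; lra.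
  - pose proof (d_nonneg y a); rewrite Eya in *; contradiction.
Qed.

End Metric.

Record matching (X : Type) := Matching
  { mK : nat -> Prop ; mphi : nat -> nat ; mz : nat -> X ; mw : nat -> X }.
Arguments Matching {X}.
Arguments mK {X}.
Arguments mphi {X}.
Arguments mz {X}.
Arguments mw {X}.

Section MatchingCombinators.
Context {X : Type}.

Definition matched (m : matching X) (j : nat) : Prop :=
  exists k, mK m k /\ mphi m k = j.

Definition step (m : matching X) (k : nat) : option nat :=
  if excluded_middle_informative (mK m k) then Some (mphi m k) else None.

Definition preimage (m : matching X) (j : nat) : option nat :=
  match excluded_middle_informative (matched m j) with
  | left H => Some (proj1_sig (constructive_indefinite_description _ H))
  | right _ => None
  end.

Lemma step_Some (m : matching X) k j :
  step m k = Some j <-> mK m k /\ mphi m k = j.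
Proof.
  unfold step; destruct (excluded_middle_informative (mK m k)) as [Hk | Hk].
  - split; [intros E; injection E; auto | intros [_ <-]; reflexivity].
  - split; [discriminate | tauto].
Qed.

Lemma preimage_Some (m : matching X) j k :
  preimage m j = Some k -> mK m k /\ mphi m k = j.
Proof.
  unfold preimage; destruct (excluded_middle_informative (matched m j)) as [H | H];
    [|discriminate].
  destruct (constructive_indefinite_description _ H) as [k' Hk']; simpl.
  intros E; injection E as <-; exact Hk'.
Qed.

Lemma preimage_None (m : matching X) j :
  preimage m j = None <-> ~ matched m j.
Proof.
  unfold preimage; destruct (excluded_middle_informative (matched m j)) as [H | H].
  - split; [discriminate | tauto].
  - tauto.
Qed.

End MatchingCombinators.

Section Matchings.
Context {X : Type} (d : X -> X -> Rbar) (A : X -> Prop).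
Hypothesis Hm : is_ext_metric d.

Definition bounded_matching (a b : fsum X) (r : R) (m : matching X) : Prop :=
  is_matching A a b (mK m) (mphi m) (mz m) (mw m) /\
  (forall k, mK m k -> Rbar_le (d (fpt a k) (fpt b (mphi m k))) r) /\
  (forall i, fidx a i -> ~ mK m i -> Rbar_le (d (fpt a i) (mz m i)) r) /\
  (forall j, fidx b j -> ~ matched m j -> Rbar_le (d (mw m j) (fpt b j)) r).

Definition matchable (a b : fsum X) (r : R) : Prop :=
  exists m, bounded_matching a b r m.

Lemma W_inf_lt_matchable a b (r : R) : Rbar_lt (W_inf d A a b) r -> matchable a b r.
Proof.
  intros Hlt; destruct (Rbar_glb_lt_ex _ _ Hlt) as (c & (K & phi & z & w & Hmatch & ->) & Hc).
  exists (Matching K phi z w); unfold match_cost in Hc; set (E := fun _ => _) in Hc.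
  assert (Hcost : forall x, E x -> Rbar_le x r).
  { intros x Hx; apply Rbar_lt_le, Rbar_le_lt_trans with (2 := Hc), (Rbar_lub_is_lub E), Hx. }
  split; [exact Hmatch|]; simpl.
  split; [|split]; intros; apply Hcost; unfold E; eauto 7.
Qed.

Lemma matchable_W_inf_le a b (r : R) : 0 <= r -> matchable a b r -> Rbar_le (W_inf d A a b) r.
Proof.
  intros Hr [[K phi z w] (Hmatch & Hpair & Hz & Hw)]; simpl in *.
  apply Rbar_le_trans with (match_cost d a b K phi z w).
  { apply Rbar_glb_le; exists K, phi, z, w; auto. }
  apply (Rbar_lub_is_lub _).
  intros x [-> | [(k & Hk & ->) | [(i & Hi & Hk & ->) | (j & Hj & Hk & ->)]]]; auto.
Qed.

Definition matching_comp (m1 m2 : matching X) : matching X :=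
  Matching (fun i => mK m1 i /\ mK m2 (mphi m1 i)) (fun i => mphi m2 (mphi m1 i))
    (fun i => if excluded_middle_informative (mK m1 i) then mz m2 (mphi m1 i) else mz m1 i)
    (fun j => match preimage m2 j with Some k => mw m1 k | None => mw m2 j end).

Lemma bounded_matching_comp a b c (r s : R) m1 m2 : 0 <= r -> 0 <= s ->
  bounded_matching a b r m1 -> bounded_matching b c s m2 ->
  bounded_matching a c (r + s) (matching_comp m1 m2).
Proof.
  intros Hr Hs ((Ka1 & Kb1 & inj1 & Az1 & Aw1) & P1 & Z1 & W1)
    ((Ka2 & Kb2 & inj2 & Az2 & Aw2) & P2 & Z2 & W2).
  unfold matching_comp, matched;
    split; [split; [|split; [|split; [|split]]] | split; [|split]]; simpl.
  - intros k [Hk _]; auto.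
  - intros k [_ Hk]; auto.
  - intros k k' [Hk Hk2] [Hk' Hk2'] E; auto.
  - intros i Hi Hn; destruct (excluded_middle_informative (mK m1 i)); auto.
  - intros j Hj Hn; destruct (preimage m2 j) as [k |] eqn:E.
    + destruct (preimage_Some _ _ _ E) as [Hk <-]; apply Aw1; auto.
      intros (k' & Hk' & <-); apply Hn; exists k'; auto.
    + apply Aw2; auto; apply preimage_None, E.
  - intros k [Hk1 Hk2]; apply d_triangle_le with (fpt b (mphi m1 k)); auto.
  - intros i Hi Hn; destruct (excluded_middle_informative (mK m1 i)) as [Hk | Hk].
    + apply d_triangle_le with (fpt b (mphi m1 i)); auto.
    + apply Rbar_le_Finite_weaken with r; auto; lra.
  - intros j Hj Hn; destruct (preimage m2 j) as [k |] eqn:E.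
    + destruct (preimage_Some _ _ _ E) as [Hk <-].
      apply d_triangle_le with (fpt b k); auto.
      apply W1; auto; intros (k' & Hk' & <-); apply Hn; exists k'; simpl; auto.
    + apply Rbar_le_Finite_weaken with s; [apply W2; auto; apply preimage_None, E | lra].
Qed.

Lemma matchable_trans a b c (r s : R) : 0 <= r -> 0 <= s ->
  matchable a b r -> matchable b c s -> matchable a c (r + s).
Proof.
  intros Hr Hs [m1 H1] [m2 H2]; exists (matching_comp m1 m2).
  apply bounded_matching_comp with b; auto.
Qed.

End Matchings.

Definition half_pow (t : nat) : R := (/ 2) ^ t.

Lemma half_pow_pos t : 0 < half_pow t.
Proof. apply pow_lt; lra. Qed.

Lemma half_pow_S t : half_pow (S t) = half_pow t / 2.
Proof. unfold half_pow; simpl; lra. Qed.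

Lemma half_pow_le t t' : (t <= t')%nat -> half_pow t' <= half_pow t.
Proof.
  induction 1 as [| t' _ IH]; [lra|].
  rewrite half_pow_S; pose proof (half_pow_pos t'); lra.
Qed.

Lemma half_pow_lt_ex eps : 0 < eps -> exists t, half_pow t < eps.
Proof.
  intros Heps.
  destruct (pow_lt_1_zero (/ 2) ltac:(rewrite Rabs_pos_eq; lra) eps Heps) as [t Ht].
  exists t; specialize (Ht t (le_n t)).
  rewrite Rabs_pos_eq in Ht; [exact Ht | apply pow_le; lra].
Qed.

Fixpoint running_max (f : nat -> nat) (k : nat) : nat :=
  match k with
  | O => f O
  | S k' => Nat.max (running_max f k') (f k)
  end.

Lemma running_max_ge f k : (f k <= running_max f k)%nat.
Proof. destruct k; simpl; lia. Qed.

Lemma running_max_S f k : (running_max f k <= running_max f (S k))%nat.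
Proof. simpl; lia. Qed.

Lemma cauchy_seq_half_pow_moduli {T : Type} (dist : T -> T -> Rbar) (u : nat -> T) :
  cauchy_seq dist u ->
  exists N : nat -> nat, (forall k, (N k <= N (S k))%nat) /\
    forall k m n, (N k <= m)%nat -> (N k <= n)%nat -> Rbar_lt (dist (u m) (u n)) (half_pow k).
Proof.
  intros Hcauchy.
  destruct (choice _ (fun k => Hcauchy (half_pow k) (half_pow_pos k))) as [N0 HN0].
  exists (running_max N0); split; [apply running_max_S|].
  intros k m n Hm Hn; pose proof (running_max_ge N0 k); apply HN0; lia.
Qed.

Section Chains.
Context {X : Type} (d : X -> X -> Rbar) (A : X -> Prop).
Hypothesis Hm : is_ext_metric d.
Hypothesis Hcomp : complete_on (fun _ : X => True) d.
Variables (beta : nat -> fsum X) (M : nat -> matching X).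
Hypothesis HM : forall t, bounded_matching d A (beta t) (beta (S t)) (half_pow t) (M t).
Hypothesis Hdinf : forall t, in_Dinf d A (beta t).

Fixpoint chain (s i n : nat) : option nat :=
  match n with
  | O => Some i
  | S n' => match chain s i n' with Some j => step (M (s + n')) j | None => None end
  end.

(* The [None] branch is a junk value: [chain_pt s i n] is only used while the chain
   is alive. *)
Definition chain_pt (s i n : nat) : X :=
  match chain s i n with Some j => fpt (beta (s + n)) j | None => fpt (beta s) i end.

Definition chain_infinite (s i : nat) : Prop := forall n, chain s i n <> None.

Definition chain_start (s i : nat) : Prop :=
  fidx (beta s) i /\ match s with O => True | S s' => ~ matched (M s') i end.

Lemma chain_S_Some s i n j : chain s i (S n) = Some j ->
  exists k, chain s i n = Some k /\ mK (M (s + n)) k /\ mphi (M (s + n)) k = j.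
Proof.
  simpl; destruct (chain s i n) as [k |]; [|discriminate].
  intros E; apply step_Some in E; eauto.
Qed.

Lemma chain_fidx s i n j : fidx (beta s) i -> chain s i n = Some j -> fidx (beta (s + n)) j.
Proof.
  intros Hi; revert j; induction n as [| n IH]; intros j Hc.
  - injection Hc as <-; rewrite Nat.add_0_r; exact Hi.
  - destruct (chain_S_Some _ _ _ _ Hc) as (k & Hk & HK & <-).
    rewrite Nat.add_succ_r; apply (HM (s + n)), HK.
Qed.

Lemma chain_None_add s i n q : chain s i n = None -> chain s i (n + q) = None.
Proof.
  intros Hn; induction q as [| q IH]; [rewrite Nat.add_0_r; exact Hn|].
  rewrite Nat.add_succ_r; simpl; rewrite IH; reflexivity.
Qed.

Lemma chain_pt_Some s i n j : chain s i n = Some j -> chain_pt s i n = fpt (beta (s + n)) j.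
Proof. intros Hc; unfold chain_pt; rewrite Hc; reflexivity. Qed.

Lemma chain_pt_dist s i n p : chain s i (n + p) <> None ->
  Rbar_le (d (chain_pt s i n) (chain_pt s i (n + p)))
    (2 * half_pow (s + n) - 2 * half_pow (s + (n + p))).
Proof.
  induction p as [| p IH]; intros Hdef.
  - rewrite !Nat.add_0_r, d_refl by exact Hm; simpl; lra.
  - rewrite Nat.add_succ_r in *.
    destruct (chain s i (S (n + p))) as [j |] eqn:E; [|congruence].
    destruct (chain_S_Some _ _ _ _ E) as (k & Hk & HK & <-).
    specialize (IH ltac:(congruence)).
    rewrite (chain_pt_Some _ _ _ _ E); rewrite (chain_pt_Some _ _ _ _ Hk) in IH.
    apply Rbar_le_Finite_weaken with
      (2 * half_pow (s + n) - 2 * half_pow (s + (n + p)) + half_pow (s + (n + p))).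
    + rewrite Nat.add_succ_r; apply d_triangle_le with (fpt (beta (s + (n + p))) k);
        [exact Hm | exact IH | apply (HM (s + (n + p))), HK].
    + rewrite Nat.add_succ_r, half_pow_S; lra.
Qed.

Lemma chain_pt_dist_le s i n p : chain s i (n + p) <> None ->
  Rbar_le (d (chain_pt s i n) (chain_pt s i (n + p))) (2 * half_pow (s + n)).
Proof.
  intros Hdef; apply Rbar_le_Finite_weaken with (1 := chain_pt_dist s i n p Hdef).
  pose proof (half_pow_pos (s + (n + p))); lra.
Qed.

Lemma chain_pt_cauchy s i : chain_infinite s i -> cauchy_seq d (chain_pt s i).
Proof.
  intros Hinf eps Heps; destruct (half_pow_lt_ex (eps / 2)) as [N HN]; [lra|].
  exists N.
  assert (Hfar : forall m p, (N <= m)%nat ->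
    Rbar_lt (d (chain_pt s i m) (chain_pt s i (m + p))) eps).
  { intros m p Hm'; apply Rbar_le_lt_trans with (1 := chain_pt_dist_le s i m p (Hinf _)); simpl.
    assert (half_pow (s + m) <= half_pow N) by (apply half_pow_le; lia); lra. }
  intros m n Hm' Hn; destruct (Nat.le_ge_cases m n).
  - replace n with (m + (n - m))%nat by lia; apply Hfar; exact Hm'.
  - replace m with (n + (m - n))%nat by lia; rewrite d_sym by exact Hm; apply Hfar; exact Hn.
Qed.

(* Arbitrary for a chain that stops. *)
Definition chain_lim (s i : nat) : X :=
  epsilon (inhabits (fpt (beta s) i)) (fun l => converges_to d (chain_pt s i) l).

Lemma chain_lim_converges s i : chain_infinite s i -> converges_to d (chain_pt s i) (chain_lim s i).
Proof.
  intros Hinf; unfold chain_lim; apply epsilon_spec.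
  destruct (Hcomp (chain_pt s i) (fun _ => I) (chain_pt_cauchy s i Hinf)) as (l & _ & Hl); eauto.
Qed.

Lemma chain_pt_lim_dist s i n : chain_infinite s i ->
  Rbar_le (d (chain_pt s i n) (chain_lim s i)) (2 * half_pow (s + n)).
Proof.
  intros Hinf; apply Rbar_le_Finite_eps; [apply d_nonneg, Hm|]; intros eta Heta.
  destruct (chain_lim_converges s i Hinf eta Heta) as [N HN].
  apply d_triangle_le with (chain_pt s i (n + N));
    [exact Hm | apply chain_pt_dist_le, Hinf | apply Rbar_lt_le, HN; lia].
Qed.

Fixpoint origin (t j : nat) : nat * nat :=
  match t with
  | O => (O, j)
  | S t' => match preimage (M t') j with Some k => origin t' k | None => (t, j) end
  end.

Lemma origin_spec t j s i : fidx (beta t) j -> origin t j = (s, i) ->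
  chain_start s i /\ exists n, t = (s + n)%nat /\ chain s i n = Some j.
Proof.
  revert j; induction t as [| t IH]; intros j Hj Ho; simpl in Ho.
  - injection Ho as <- <-; split; [split; auto | exists O; auto].
  - destruct (preimage (M t) j) as [k |] eqn:E.
    + destruct (preimage_Some _ _ _ E) as [HK Hkj].
      assert (Hk : fidx (beta t) k) by (apply (HM t), HK).
      destruct (IH k Hk Ho) as (Hst & n & -> & Hc).
      split; [exact Hst|]; exists (S n); split; [lia|].
      simpl; rewrite Hc; apply step_Some; auto.
    + injection Ho as <- <-.
      split; [split; [exact Hj | apply preimage_None, E] | exists O; split; [lia | reflexivity]].
Qed.

Lemma origin_chain s i n j : chain_start s i -> chain s i n = Some j -> origin (s + n) j = (s, i).
Proof.
  intros [Hi Hfirst]; revert j; induction n as [| n IH]; intros j Hc.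
  - injection Hc as <-; rewrite Nat.add_0_r.
    destruct s as [| s']; simpl; [reflexivity|].
    rewrite (proj2 (preimage_None _ _) Hfirst); reflexivity.
  - destruct (chain_S_Some _ _ _ _ Hc) as (k & Hk & HK & <-).
    rewrite Nat.add_succ_r; simpl.
    destruct (preimage (M (s + n)) (mphi (M (s + n)) k)) as [k' |] eqn:E.
    + destruct (preimage_Some _ _ _ E) as [HK' Hk'].
      assert (k' = k) as -> by (apply (HM (s + n)); auto).
      apply IH, Hk.
    + exfalso; apply (proj1 (preimage_None _ _) E); exists k; auto.
Qed.

Definition limit_index (s i : nat) : Prop :=
  chain_start s i /\ chain_infinite s i /\ ~ A (chain_lim s i).

Definition chain_limits : fsum X :=
  FSum (fun n => limit_index (fst (of_nat n)) (snd (of_nat n)))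
       (fun n => chain_lim (fst (of_nat n)) (snd (of_nat n))).

Lemma chain_limits_fidx s i : fidx chain_limits (to_nat (s, i)) <-> limit_index s i.
Proof. unfold chain_limits; cbn [fidx]; rewrite cancel_of_to; reflexivity. Qed.

Lemma chain_limits_fpt s i : fpt chain_limits (to_nat (s, i)) = chain_lim s i.
Proof. unfold chain_limits; cbn [fpt]; rewrite cancel_of_to; reflexivity. Qed.

Lemma chain_limits_index n : fidx chain_limits n ->
  exists s i, n = to_nat (s, i) /\ limit_index s i.
Proof.
  intros Hn; exists (fst (of_nat n)), (snd (of_nat n)).
  rewrite <- surjective_pairing, cancel_to_of; auto.
Qed.

Lemma chain_at s i t : chain_start s i -> chain_infinite s i -> (s <= t)%nat ->
  exists j, fidx (beta t) j /\ origin t j = (s, i) /\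
    Rbar_le (d (fpt (beta t) j) (chain_lim s i)) (2 * half_pow t).
Proof.
  intros Hst Hinf Hst_t; replace t with (s + (t - s))%nat by lia.
  destruct (chain s i (t - s)) as [j |] eqn:Hc; [|exfalso; exact (Hinf _ Hc)].
  exists j; split; [apply chain_fidx with i; [apply Hst | exact Hc]|].
  split; [apply origin_chain; assumption|].
  rewrite <- (chain_pt_Some _ _ _ _ Hc); apply chain_pt_lim_dist, Hinf.
Qed.

Lemma late_chain_lim_near_A s i k : chain_start s i -> chain_infinite s i -> (k < s)%nat ->
  exists w, A w /\ Rbar_le (d w (chain_lim s i)) (2 * half_pow k).
Proof.
  intros [Hi Hfirst] Hinf Hks; destruct s as [| s']; [lia|].
  destruct (HM s') as ((_ & _ & _ & _ & Aw) & _ & _ & Wle).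
  exists (mw (M s') i); split; [apply Aw; assumption|].
  pose proof (chain_pt_lim_dist (S s') i 0 Hinf) as Hlim.
  unfold chain_pt in Hlim; simpl in Hlim; rewrite Nat.add_0_r, half_pow_S in Hlim.
  apply Rbar_le_Finite_weaken with (half_pow s' + 2 * (half_pow s' / 2)).
  - apply d_triangle_le with (fpt (beta (S s')) i); [exact Hm | apply Wle; assumption | exact Hlim].
  - assert (half_pow s' <= half_pow k) by (apply half_pow_le; lia); lra.
Qed.

Lemma chain_limits_in_Dinf : in_Dinf d A chain_limits.
Proof.
  split; [intros n Hn; apply Hn|].
  intros delta Hdelta.
  destruct (half_pow_lt_ex (delta / 4)) as [t Ht]; [lra|].
  destruct (proj2 (Hdinf t) (delta / 2)) as [l Hl]; [lra|].
  exists (map (fun j => to_nat (origin t j)) l).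
  intros n Hn Hfar; destruct (chain_limits_index n Hn) as (s & i & -> & Hst & Hinf & _).
  rewrite chain_limits_fpt in Hfar.
  destruct (Nat.le_gt_cases s t) as [Hst_t | Hts].
  - destruct (chain_at s i t Hst Hinf Hst_t) as (j & Hj & Ho & Hdj).
    apply in_map_iff; exists j; rewrite Ho; split; [reflexivity|].
    apply Hl; [exact Hj|]; intros Hnear; apply Hfar.
    rewrite d_sym in Hdj by exact Hm.
    apply Rbar_lt_le_trans with (2 * half_pow t + delta / 2);
      [exact (dist_set_lt_triangle d A Hm _ _ _ _ Hdj Hnear) | simpl; lra].
  - destruct (late_chain_lim_near_A s i t Hst Hinf Hts) as (w & Hw & Hdw).
    exfalso; apply Hfar, dist_set_lt with w; [exact Hw|]; rewrite d_sym by exact Hm.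
    apply Rbar_le_lt_trans with (1 := Hdw); simpl; lra.
Qed.

Lemma chain_last s i n j : chain s i n = Some j -> ~ chain_infinite s i ->
  exists p j', chain s i (n + p) = Some j' /\ ~ mK (M (s + (n + p))) j'.
Proof.
  intros Hn Hfin; destruct (not_all_ex_not _ _ Hfin) as [m Hdead]; apply NNPP in Hdead.
  assert (Hnm : (n <= m)%nat).
  { destruct (Nat.le_gt_cases n m) as [| Hmn]; [assumption|].
    pose proof (chain_None_add s i m (n - m) Hdead) as Hnone.
    replace (m + (n - m))%nat with n in Hnone by lia; congruence. }
  replace m with (n + (m - n))%nat in Hdead by lia.
  generalize dependent (m - n)%nat; intros q; clear m Hnm.
  revert n j Hn; induction q as [| q IH]; intros n j Hn Hq.
  - rewrite Nat.add_0_r in Hq; congruence.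
  - destruct (chain s i (S n)) as [j1 |] eqn:E1.
    + rewrite Nat.add_succ_r, <- Nat.add_succ_l in Hq.
      destruct (IH (S n) j1 E1 Hq) as (p & j' & Hp & HK).
      exists (S p), j'; rewrite Nat.add_succ_r, <- Nat.add_succ_l; auto.
    + exists O, j; rewrite Nat.add_0_r; split; [exact Hn|]; intros HK.
      simpl in E1; rewrite Hn in E1.
      assert (step (M (s + n)) j = Some (mphi (M (s + n)) j)) by (apply step_Some; auto).
      congruence.
Qed.

Definition tracked (k j : nat) : Prop :=
  fidx (beta k) j /\ fidx chain_limits (to_nat (origin k j)).

Lemma untracked_point_near_A k j : exists z, fidx (beta k) j -> ~ tracked k j ->
  A z /\ Rbar_le (d (fpt (beta k) j) z) (2 * half_pow k).
Proof.
  destruct (classic (fidx (beta k) j)) as [Hj | Hj]; [|exists (fpt (beta k) j); tauto].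
  destruct (origin k j) as [s i] eqn:Eo.
  destruct (origin_spec k j s i Hj Eo) as (Hst & n & -> & Hc).
  destruct (classic (chain_infinite s i)) as [Hinf | Hfin].
  - exists (chain_lim s i); intros _ Hnt; split.
    + apply NNPP; intros HA; apply Hnt; split; [exact Hj|].
      rewrite Eo; apply chain_limits_fidx; exact (conj Hst (conj Hinf HA)).
    + rewrite <- (chain_pt_Some _ _ _ _ Hc); apply chain_pt_lim_dist, Hinf.
  - destruct (chain_last s i n j Hc Hfin) as (p & j' & Hc' & HK).
    destruct (HM (s + (n + p))) as ((_ & _ & _ & Az & _) & _ & Zle & _).
    assert (Hj' : fidx (beta (s + (n + p))) j')
      by (apply chain_fidx with i; [apply Hst | exact Hc']).
    exists (mz (M (s + (n + p))) j'); intros _ _; split; [apply Az; assumption|].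
    pose proof (chain_pt_dist s i n p ltac:(congruence)) as Hpath.
    rewrite (chain_pt_Some _ _ _ _ Hc), (chain_pt_Some _ _ _ _ Hc') in Hpath.
    apply Rbar_le_Finite_weaken with
      (2 * half_pow (s + n) - 2 * half_pow (s + (n + p)) + half_pow (s + (n + p))).
    + apply d_triangle_le with (fpt (beta (s + (n + p))) j');
        [exact Hm | exact Hpath | apply Zle; assumption].
    + pose proof (half_pow_pos (s + (n + p))); lra.
Qed.

Lemma untracked_limit_near_A k n : exists w, fidx chain_limits n ->
  ~ (exists j, tracked k j /\ to_nat (origin k j) = n) ->
  A w /\ Rbar_le (d w (fpt chain_limits n)) (2 * half_pow k).
Proof.
  destruct (classic (fidx chain_limits n)) as [Hn | Hn];
    [|exists (fpt chain_limits n); tauto].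
  destruct (chain_limits_index n Hn) as (s & i & -> & Hst & Hinf & _).
  destruct (Nat.le_gt_cases s k) as [Hsk | Hks].
  - exists (chain_lim s i); intros _ Hno; exfalso; apply Hno.
    destruct (chain_at s i k Hst Hinf Hsk) as (j & Hj & Ho & _).
    exists j; rewrite Ho; split; [split; [exact Hj | rewrite Ho; exact Hn] | reflexivity].
  - destruct (late_chain_lim_near_A s i k Hst Hinf Hks) as (w & Hw & Hdw).
    exists w; intros _ _; rewrite chain_limits_fpt; auto.
Qed.

Lemma matchable_chain_limits k : matchable d A (beta k) chain_limits (2 * half_pow k).
Proof.
  destruct (choice _ (untracked_point_near_A k)) as [z Hz].
  destruct (choice _ (untracked_limit_near_A k)) as [w Hw].
  exists (Matching (tracked k) (fun j => to_nat (origin k j)) z w).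
  split; [split; [|split; [|split; [|split]]] | split; [|split]];
    cbn [mK mphi mz mw matched]; try apply Hz; try apply Hw.
  - intros j [Hj _]; exact Hj.
  - intros j [_ Hj]; exact Hj.
  - intros j j' [Hj _] [Hj' _] E.
    apply (f_equal of_nat) in E; rewrite !cancel_of_to in E.
    destruct (origin k j) as [s i] eqn:Eo.
    destruct (origin_spec k j s i Hj Eo) as (_ & n & Hkn & Hc).
    destruct (origin_spec k j' s i Hj' (eq_sym E)) as (_ & n' & Hkn' & Hc').
    assert (n' = n) as -> by lia; congruence.
  - intros j [Hj Htr].
    destruct (origin k j) as [s i] eqn:Eo.
    destruct (origin_spec k j s i Hj Eo) as (_ & n & -> & Hc).
    destruct (proj1 (chain_limits_fidx s i) Htr) as (_ & Hinf & _).
    rewrite chain_limits_fpt, <- (chain_pt_Some _ _ _ _ Hc); apply chain_pt_lim_dist, Hinf.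
Qed.
End Chains.

Theorem theorem6p3 (X : Type) (d : X -> X -> Rbar) (A : X -> Prop) :
  is_ext_metric d ->
  is_closed_set d A ->
  complete_on (fun _ : X => True) d ->
  complete_on (in_Dinf d A) (W_inf d A).
Proof.
  intros Hm _ Hcomp u Hu Hcauchy.
  destruct (cauchy_seq_half_pow_moduli _ _ Hcauchy) as (N & HNmono & HN).
  assert (Hnext : forall t, matchable d A (u (N t)) (u (N (S t))) (half_pow t)).
  { intros t; apply W_inf_lt_matchable, HN; [lia | specialize (HNmono t); lia]. }
  destruct (choice _ Hnext) as [M HM].
  exists (chain_limits d A (fun t => u (N t)) M); split.
  - exact (chain_limits_in_Dinf d A Hm Hcomp _ M HM (fun t => Hu (N t))).
  - intros eps Heps; destruct (half_pow_lt_ex (eps / 3)) as [k Hk]; [lra|].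
    exists (N k); intros n Hn; pose proof (half_pow_pos k).
    apply Rbar_le_lt_trans with (half_pow k + 2 * half_pow k); [|simpl; lra].
    apply matchable_W_inf_le; [lra|].
    apply matchable_trans with (u (N k)); [exact Hm | lra | lra | |].
    + apply W_inf_lt_matchable, HN; lia.
    + exact (matchable_chain_limits d A Hm Hcomp _ M HM k).
Qed.
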